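(* Let $d\ge 1$ and $q\ge 1$ be integers, let $\mathbf{g}_0\in\mathbb{R}^d$ (the server's gradient at iteration $t$, computed on the clean root dataset), and let $\nabla F(\mathbf{w}^t)\in\mathbb{R}^d$ be the gradient of the expected risk at the current model $\mathbf{w}^t$. Let $\bar{\mathbf{g}}_1,\dots,\bar{\mathbf{g}}_N\in\mathbb{R}^d$ be the vectors submitted by the $N$ clients, where any number of them may be adversarial (arbitrary), subject only to $\|\bar{\mathbf{g}}_i\|\le\|\mathbf{g}_0\|$ for every $i$. Let $\eta_1,\dots,\eta_N\ge 0$ be aggregation weights with $\sum_{i=1}^N\eta_i=1$, and let $\bar{\mathbf{g}}^t=\sum_{i=1}^N\eta_i\bar{\mathbf{g}}_i$. Then $$\|\bar{\mathbf{g}}^t-\nabla F(\mathbf{w}^t)\|\le 3\|\mathbf{g}_0-\nabla F(\mathbf{w}^t)\|+2\|\nabla F(\mathbf{w}^t)\|+\frac{\sqrt{d}}{q}.$$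
   Context: All norms are Euclidean. In the underlying federated learning protocol, honest client $i$ with local gradient $\mathbf{g}_i$ submits $\bar{\mathbf{g}}_i=Q\!\left(\frac{\|\mathbf{g}_0\|}{\|\mathbf{g}_i\|}\mathbf{g}_i\right)$, where $Q$ is applied coordinatewise with $Q(x)=\lfloor qx\rfloor/q$ for $x\ge0$ and $Q(x)=(\lfloor qx\rfloor+1)/q$ for $x<0$; the server verifies $\|\bar{\mathbf{g}}_i\|\le\|\mathbf{g}_0\|$ for all clients, so adversarial clients may submit any vector satisfying this bound. The weights are $\eta_i=TS_i/\sum_j TS_j$ with trust scores $TS_i=\max\bigl(0,\langle\bar{\mathbf{g}}_i,\mathbf{g}_0\rangle/\|\mathbf{g}_0\|^2\bigr)$ (assumed not all zero), hence nonnegative and summing to one. *)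

From HB Require Import structures.
From mathcomp Require Import all_boot all_order all_algebra.
Set Implicit Arguments. Unset Strict Implicit. Unset Printing Implicit Defensive.
Import Order.TTheory GRing.Theory Num.Theory.
Local Open Scope ring_scope.

Definition enorm (R : rcfType) (d : nat) (v : 'rV[R]_d) : R :=
  Num.sqrt (\sum_(i < d) v 0 i ^+ 2).

From HB Require Import structures.
From mathcomp Require Import all_boot all_order all_algebra.
From mathcomp Require Import ring lra.
Set Implicit Arguments.
Unset Strict Implicit.
Unset Printing Implicit Defensive.

Import Order.TTheory GRing.Theory Num.Theory.
Local Open Scope ring_scope.

(* Every submitted vector lies in the ball of radius ||g0||, and the weights form
   a convex combination, so the aggregate also satisfies ||gbar|| <= ||g0||.  Two
   triangle inequalities then give
     ||gbar - grad F|| <= ||gbar|| + ||grad F|| <= ||g0 - grad F|| + 2 ||grad F||,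
   which is already stronger than the claim: the factor 3 and the quantization
   term sqrt d / q are slack. *)

Section EuclideanNorm.
Variables (R : rcfType) (d : nat).
Implicit Types u v : 'rV[R]_d.

Lemma enorm_ge0 u : 0 <= enorm u.
Proof. exact: sqrtr_ge0. Qed.

Lemma enorm_sqr u : enorm u ^+ 2 = \sum_(i < d) u 0 i ^+ 2.
Proof. by rewrite sqr_sqrtr //; apply: sumr_ge0 => i _; apply: sqr_ge0. Qed.

Lemma enorm_eq0 u : (enorm u == 0) = (u == 0).
Proof.
apply/idP/eqP => [|->]; last first.
  by rewrite /enorm big1 ?sqrtr0 // => i _; rewrite mxE expr0n.
rewrite -sqrf_eq0 enorm_sqr psumr_eq0 => [/allP u0|i _]; last exact: sqr_ge0.
apply/rowP => i; rewrite mxE.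
by apply/eqP; rewrite -sqrf_eq0; apply: u0; rewrite mem_index_enum.
Qed.

Lemma enorm0 : enorm (0 : 'rV[R]_d) = 0.
Proof. by apply/eqP; rewrite enorm_eq0. Qed.

Lemma enorm_CauchySchwarz u v :
  \sum_(i < d) u 0 i * v 0 i <= enorm u * enorm v.
Proof.
have [->|u0] := eqVneq u 0.
  by rewrite big1 ?mulr_ge0 ?enorm_ge0 // => i _; rewrite mxE mul0r.
have [->|v0] := eqVneq v 0.
  by rewrite big1 ?mulr_ge0 ?enorm_ge0 // => i _; rewrite mxE mulr0.
have AB_gt0 : 0 < enorm u * enorm v.
  by rewrite mulr_gt0 // lt_def enorm_ge0 enorm_eq0 ?u0 ?v0.
move: AB_gt0 (enorm_sqr u) (enorm_sqr v).
move: (enorm u) (enorm v) => A B AB_gt0 A2 B2.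
have expand : \sum_(i < d) (B * u 0 i - A * v 0 i) ^+ 2
    = 2 * (A * B) * (A * B - \sum_(i < d) u 0 i * v 0 i).
  transitivity (B ^+ 2 * \sum_(i < d) u 0 i ^+ 2 + A ^+ 2 * \sum_(i < d) v 0 i ^+ 2
                - 2 * (A * B) * \sum_(i < d) u 0 i * v 0 i).
    by rewrite !mulr_sumr -big_split -sumrB; apply: eq_bigr => i _ /=; ring.
  by rewrite -A2 -B2; ring.
have : 0 <= A * B - \sum_(i < d) u 0 i * v 0 i.
  rewrite -(pmulr_rge0 _ (mulr_gt0 (ltr0Sn R 1) AB_gt0)) -expand.
  by apply: sumr_ge0 => i _; apply: sqr_ge0.
by rewrite subr_ge0.
Qed.

Lemma enormD u v : enorm (u + v) <= enorm u + enorm v.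
Proof.
rewrite -ler_sqr ?nnegrE ?addr_ge0 ?enorm_ge0 // sqrrD !enorm_sqr.
have -> : \sum_(i < d) (u + v) 0 i ^+ 2 = \sum_(i < d) u 0 i ^+ 2 +
    \sum_(i < d) v 0 i ^+ 2 + 2 * \sum_(i < d) u 0 i * v 0 i.
  by rewrite mulr_sumr -!big_split; apply: eq_bigr => i _ /=; rewrite !mxE; ring.
by have := enorm_CauchySchwarz u v; lra.
Qed.

Lemma enormZ (c : R) u : enorm (c *: u) = `|c| * enorm u.
Proof.
rewrite /enorm -sqrtr_sqr -sqrtrM ?sqr_ge0 // mulr_sumr.
by congr Num.sqrt; apply: eq_bigr => i _; rewrite mxE exprMn.
Qed.

Lemma enormN u : enorm (- u) = enorm u.
Proof. by rewrite -scaleN1r enormZ normrN1 mul1r. Qed.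

Lemma enormB u v : enorm (u - v) <= enorm u + enorm v.
Proof. by rewrite -(enormN v) enormD. Qed.

Lemma enorm_sum (I : Type) (r : seq I) (P : pred I) (F : I -> 'rV[R]_d) :
  enorm (\sum_(i <- r | P i) F i) <= \sum_(i <- r | P i) enorm (F i).
Proof.
apply: (big_ind2 (fun v b => enorm v <= b)) => [|u a w b ua wb|//].
  by rewrite enorm0.
exact: le_trans (enormD u w) (lerD ua wb).
Qed.

Lemma enorm_convex_comb_le (I : finType) (eta : I -> R) (v : I -> 'rV[R]_d)
    (rho : R) :
  (forall i, 0 <= eta i) -> \sum_i eta i = 1 -> (forall i, enorm (v i) <= rho) ->
  enorm (\sum_i eta i *: v i) <= rho.
Proof.
move=> eta_ge0 eta_sum1 v_le; apply: le_trans (enorm_sum _ _ _) _.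
rewrite -[rho]mul1r -eta_sum1 mulr_suml; apply: ler_sum => i _.
by rewrite enormZ ger0_norm // ler_wpM2l.
Qed.

End EuclideanNorm.

Theorem mainTheorem1 (R : rcfType) (d q N : nat) (hd : (1 <= d)%N) (hq : (1 <= q)%N)
  (g0 gradF : 'rV[R]_d) (gbar : 'I_N -> 'rV[R]_d) (eta : 'I_N -> R)
  (hnorm : forall i, enorm (gbar i) <= enorm g0)
  (heta0 : forall i, 0 <= eta i)
  (heta1 : \sum_(i < N) eta i = 1) :
  enorm (\sum_(i < N) eta i *: gbar i - gradF)
    <= 3%:R * enorm (g0 - gradF) + 2%:R * enorm gradF + Num.sqrt (d%:R) / q%:R.
Proof.
have agg_le := enorm_convex_comb_le heta0 heta1 hnorm.
have dev_le := enormB (\sum_(i < N) eta i *: gbar i) gradF.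
have g0_le : enorm g0 <= enorm (g0 - gradF) + enorm gradF.
  by rewrite -{1}(subrK gradF g0) enormD.
have quant_ge0 : 0 <= Num.sqrt (d%:R : R) / q%:R by rewrite divr_ge0 ?sqrtr_ge0.
have := enorm_ge0 (g0 - gradF); have := enorm_ge0 gradF; lra.
Qed.
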